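(* With $0<q<1$, $p=1-q$, $Q=1/q$, $L=\log Q$, let \[ c_2(q)=-\frac{p}{qL}\sum_{l\ge1}\frac{1}{Q^l-1}+\frac pq\sum_{l\ge1}\frac{lQ^l}{(Q^l-1)^2}+\frac1L-\frac1p-\frac qp. \] Then, as $q\to1^-$, \[ c_2(q)=\frac14+\frac19\log q+O(\log^2 q); \] in particular $c_2(q)\to\frac14$. *)

From Stdlib Require Import Reals.
From Coquelicot Require Import Coquelicot.
Open Scope R_scope.

(* c_2(q) with p = 1 - q, Q = 1/q, L = log Q.  Sums over l >= 1 are written
   as Coquelicot [Series] over n >= 0 with l = n + 1. *)
Definition c2 (q : R) : R :=
  let p := 1 - q in
  let Q := / q in
  let L := ln Q in
  - (p / (q * L)) * Series (fun n : nat => / (Q ^ (S n) - 1))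
  + (p / q) * Series (fun n : nat => INR (S n) * Q ^ (S n) / (Q ^ (S n) - 1) ^ 2)
  + / L - / p - q / p.

From Stdlib Require Import Reals Lra Lia.
From Coquelicot Require Import Coquelicot.
Open Scope R_scope.

(* Put t = ln (1/q) and phi x = x / (e^x - 1).  Since p/q = e^t - 1, the two series in c2
   combine into (e^t - 1)/t^2 * sum_{n>=1} (- t phi'(n t)), a Riemann sum of - phi' with step t.
   The Euler-Maclaurin formula with boundary term phi - (t/2) phi' + (t^2/12) phi'' makes each
   step exact up to O(t^4 phi); since phi x <= e^(-x/2) the accumulated error is O(t^3), i.e.
   O(t^2) in c2.  The boundary term at x = t, together with the elementary part of c2, expands
   to 1/4 - t/9 + O(t^2).  The bounds |phi^(k)| <= C phi come from phi = 1/A with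
   A x = int_0^1 e^(s x) ds, whose derivatives int_0^1 s^k e^(s x) ds all lie in [0, A x]. *)

Lemma sub_le_sub_of_is_derive_le (u u' v v' : R -> R) (a b : R) :
  a <= b ->
  (forall x, a <= x <= b -> is_derive u x (u' x)) ->
  (forall x, a <= x <= b -> is_derive v x (v' x)) ->
  (forall x, a <= x <= b -> u' x <= v' x) ->
  u b - u a <= v b - v a.
Proof.
  intros Hab Hu Hv Hle.
  destruct (Req_dec a b) as [<-|Hne]; [lra|].
  assert (Hd : forall x, a <= x <= b -> is_derive (fun y => v y - u y) x (v' x - u' x)).
  { intros x Hx; exact (is_derive_minus _ _ _ _ _ (Hv x Hx) (Hu x Hx)). }
  destruct (MVT_gen (fun x => v x - u x) a b (fun x => v' x - u' x)) as [c [Hc Heq]].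
  - intros x Hx; rewrite Rmin_left, Rmax_right in Hx by lra; apply Hd; lra.
  - intros x Hx; rewrite Rmin_left, Rmax_right in Hx by lra.
    apply continuity_pt_filterlim, (ex_derive_continuous (fun y => v y - u y)).
    eexists; apply Hd; lra.
  - rewrite Rmin_left, Rmax_right in Hc by lra.
    specialize (Hle c Hc). nra.
Qed.

Lemma Rabs_le_of_is_derive (u u' v v' : R -> R) (a b : R) :
  a <= b -> u a = 0 -> v a = 0 ->
  (forall x, a <= x <= b -> is_derive u x (u' x)) ->
  (forall x, a <= x <= b -> is_derive v x (v' x)) ->
  (forall x, a <= x <= b -> Rabs (u' x) <= v' x) ->
  Rabs (u b) <= v b.
Proof.
  intros Hab Hua Hva Hu Hv Hle.
  assert (Hup : u b - u a <= v b - v a).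
  { apply (sub_le_sub_of_is_derive_le u u' v v'); auto.
    intros x Hx; specialize (Hle x Hx); apply Rabs_le_between in Hle; lra. }
  assert (Hlo : - u b - - u a <= v b - v a).
  { apply (sub_le_sub_of_is_derive_le (fun x => - u x) (fun x => - u' x) v v'); auto.
    - intros x Hx; exact (is_derive_opp _ _ _ (Hu x Hx)).
    - intros x Hx; specialize (Hle x Hx); apply Rabs_le_between in Hle; lra. }
  apply Rabs_le; lra.
Qed.

Lemma nonneg_of_is_derive_nonneg (v v' : R -> R) (b : R) :
  0 <= b -> v 0 = 0 ->
  (forall x, 0 <= x <= b -> is_derive v x (v' x)) ->
  (forall x, 0 <= x <= b -> 0 <= v' x) -> 0 <= v b.
Proof.
  intros Hb Hv0 Hv Hpos.
  assert (H : 0 - 0 <= v b - v 0).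
  { apply (sub_le_sub_of_is_derive_le (fun _ => 0) (fun _ => 0) v v'); auto.
    intros; apply (is_derive_const (V := R_NormedModule)). }
  lra.
Qed.

Section Taylor.

Variables (g0 g1 g2 g3 g4 : R -> R) (a b M : R).
Hypothesis Hg0 : forall x, a <= x <= b -> is_derive g0 x (g1 x).
Hypothesis Hg1 : forall x, a <= x <= b -> is_derive g1 x (g2 x).
Hypothesis Hg2 : forall x, a <= x <= b -> is_derive g2 x (g3 x).
Hypothesis Hg3 : forall x, a <= x <= b -> is_derive g3 x (g4 x).
Hypothesis Hg4 : forall x, a <= x <= b -> Rabs (g4 x) <= M.

Ltac derive_remainder Hg :=
  intros y Hy; apply (is_derive_minus (V := R_NormedModule));
  [apply Hg; lra | auto_derive; [exact I | field]].

Lemma taylor_remainder3 x : a <= x <= b ->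
  Rabs (g3 x - g3 a) <= M * (x - a).
Proof.
  intros Hx.
  apply (Rabs_le_of_is_derive (fun y => g3 y - g3 a) (fun y => g4 y - 0)
           (fun y => M * (y - a)) (fun _ => M) a x); try lra; try ring.
  - derive_remainder Hg3.
  - intros y Hy; auto_derive; [exact I | ring].
  - intros y Hy; rewrite Rminus_0_r; apply Hg4; lra.
Qed.

Lemma taylor_remainder2 x : a <= x <= b ->
  Rabs (g2 x - (g2 a + g3 a * (x - a))) <= M * (x - a) ^ 2 / 2.
Proof.
  intros Hx.
  apply (Rabs_le_of_is_derive (fun y => g2 y - (g2 a + g3 a * (y - a)))
           (fun y => g3 y - g3 a) (fun y => M * (y - a) ^ 2 / 2) (fun y => M * (y - a)) a x);
    try lra; try field.
  - derive_remainder Hg2.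
  - intros y Hy; auto_derive; [exact I | field].
  - intros y Hy; apply taylor_remainder3; lra.
Qed.

Lemma taylor_remainder1 x : a <= x <= b ->
  Rabs (g1 x - (g1 a + g2 a * (x - a) + g3 a * (x - a) ^ 2 / 2)) <= M * (x - a) ^ 3 / 6.
Proof.
  intros Hx.
  apply (Rabs_le_of_is_derive (fun y => g1 y - (g1 a + g2 a * (y - a) + g3 a * (y - a) ^ 2 / 2))
           (fun y => g2 y - (g2 a + g3 a * (y - a)))
           (fun y => M * (y - a) ^ 3 / 6) (fun y => M * (y - a) ^ 2 / 2) a x);
    try lra; try field.
  - derive_remainder Hg1.
  - intros y Hy; auto_derive; [exact I | field].
  - intros y Hy; apply taylor_remainder2; lra.
Qed.

Lemma taylor_remainder0 x : a <= x <= b ->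
  Rabs (g0 x - (g0 a + g1 a * (x - a) + g2 a * (x - a) ^ 2 / 2 + g3 a * (x - a) ^ 3 / 6))
    <= M * (x - a) ^ 4 / 24.
Proof.
  intros Hx.
  apply (Rabs_le_of_is_derive
           (fun y => g0 y - (g0 a + g1 a * (y - a) + g2 a * (y - a) ^ 2 / 2 + g3 a * (y - a) ^ 3 / 6))
           (fun y => g1 y - (g1 a + g2 a * (y - a) + g3 a * (y - a) ^ 2 / 2))
           (fun y => M * (y - a) ^ 4 / 24) (fun y => M * (y - a) ^ 3 / 6) a x);
    try lra; try field.
  - derive_remainder Hg0.
  - intros y Hy; auto_derive; [exact I | field].
  - intros y Hy; apply taylor_remainder1; lra.
Qed.

End Taylor.

(* pow_exp_integral k x = int_0^x y^k e^y dy, via integration by parts *)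
Fixpoint pow_exp_integral (k : nat) (x : R) : R :=
  match k with
  | O => exp x - 1
  | S j => x ^ S j * exp x - INR (S j) * pow_exp_integral j x
  end.

Lemma is_derive_pow_exp_integral k x :
  is_derive (pow_exp_integral k) x (x ^ k * exp x).
Proof.
  induction k as [|k IH].
  - unfold pow_exp_integral; auto_derive; [exact I | ring].
  - replace (x ^ S k * exp x) with
      ((INR (S k) * 1 * x ^ k * exp x + x ^ S k * exp x) - INR (S k) * (x ^ k * exp x)) by ring.
    apply (is_derive_minus (V := R_NormedModule)).
    + apply (is_derive_mult (fun y => y ^ S k) exp).
      * exact (is_derive_pow id (S k) x 1 (is_derive_id x)).
      * apply is_derive_exp.
      * intros; apply Rmult_comm.
    + apply is_derive_scal; exact IH.
Qed.

Lemma pow_exp_integral_0 k : pow_exp_integral k 0 = 0.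
Proof.
  induction k as [|k IH]; simpl; rewrite ?IH, exp_0; ring.
Qed.

Lemma pow_exp_integral_ge0 k x : 0 <= x -> 0 <= pow_exp_integral k x.
Proof.
  intros Hx.
  apply (nonneg_of_is_derive_nonneg (pow_exp_integral k) (fun y => y ^ k * exp y)); auto.
  - apply pow_exp_integral_0.
  - intros y _; apply is_derive_pow_exp_integral.
  - intros y Hy; apply Rmult_le_pos; [apply pow_le; lra | apply Rlt_le, exp_pos].
Qed.

Lemma pow_exp_integral_S_le k x : 0 <= x ->
  pow_exp_integral (S k) x <= x * pow_exp_integral k x.
Proof.
  intros Hx.
  enough (0 <= x * pow_exp_integral k x - pow_exp_integral (S k) x) by lra.
  apply (nonneg_of_is_derive_nonneg
           (fun y => y * pow_exp_integral k y - pow_exp_integral (S k) y) (pow_exp_integral k));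
    auto.
  - cbv beta; rewrite !pow_exp_integral_0; ring.
  - intros y _.
    replace (pow_exp_integral k y) with
      ((1 * pow_exp_integral k y + y * (y ^ k * exp y)) - y ^ S k * exp y) by (simpl; ring).
    apply (is_derive_minus (V := R_NormedModule)); [|apply is_derive_pow_exp_integral].
    apply (is_derive_mult id); [exact (is_derive_id y) | apply is_derive_pow_exp_integral |].
    intros; apply Rmult_comm.
  - intros y Hy; apply pow_exp_integral_ge0; lra.
Qed.

(* exp_moment k x = int_0^1 s^k e^(s x) ds *)
Definition exp_moment (k : nat) (x : R) : R := pow_exp_integral k x / x ^ S k.

Lemma is_derive_exp_moment k x : 0 < x ->
  is_derive (exp_moment k) x (exp_moment (S k) x).
Proof.
  intros Hx.
  assert (Hxk : x ^ S k <> 0) by (apply pow_nonzero; lra).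
  assert (Hpow : is_derive (fun y => y ^ S k) x (INR (S k) * 1 * x ^ k))
    by exact (is_derive_pow id (S k) x 1 (is_derive_id x)).
  change (exp_moment (S k) x) with
    ((x ^ S k * exp x - INR (S k) * pow_exp_integral k x) / x ^ S (S k)).
  replace ((x ^ S k * exp x - INR (S k) * pow_exp_integral k x) / x ^ S (S k)) with
    ((x ^ k * exp x * x ^ S k - pow_exp_integral k x * (INR (S k) * 1 * x ^ k)) / (x ^ S k) ^ 2)
    by (simpl; field; split; [apply pow_nonzero|]; lra).
  apply (is_derive_div (pow_exp_integral k) (fun y => y ^ S k)); auto.
  apply is_derive_pow_exp_integral.
Qed.

Lemma exp_moment_ge0 k x : 0 < x -> 0 <= exp_moment k x.
Proof.
  intros Hx; apply Rdiv_le_0_compat; [apply pow_exp_integral_ge0; lra | apply pow_lt; lra].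
Qed.

Lemma exp_moment_le_exp_moment_0 k x : 0 < x -> exp_moment k x <= exp_moment 0 x.
Proof.
  intros Hx; induction k as [|k IH]; [lra|].
  apply Rle_trans with (exp_moment k x); [|exact IH].
  unfold exp_moment; apply Rmult_le_reg_r with (x ^ S (S k)); [apply pow_lt; lra|].
  replace (pow_exp_integral k x / x ^ S k * x ^ S (S k)) with (x * pow_exp_integral k x)
    by (simpl; field; split; [apply pow_nonzero|]; lra).
  replace (pow_exp_integral (S k) x / x ^ S (S k) * x ^ S (S k)) with (pow_exp_integral (S k) x)
    by (field; apply pow_nonzero; lra).
  apply pow_exp_integral_S_le; lra.
Qed.

Lemma exp_moment_0_eq x : 0 < x -> exp_moment 0 x = (exp x - 1) / x.
Proof. intros Hx; unfold exp_moment; simpl; field; lra. Qed.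

Lemma exp_moment_0_pos x : 0 < x -> 0 < exp_moment 0 x.
Proof.
  intros Hx; rewrite exp_moment_0_eq by lra.
  apply Rdiv_lt_0_compat; [pose proof (exp_ineq1 x) |]; lra.
Qed.

Section ReciprocalDerivatives.

Variables a0 a1 a2 a3 a4 : R -> R.

Definition inv_deriv1 x := - a1 x / a0 x ^ 2.
Definition inv_deriv2 x := - a2 x / a0 x ^ 2 + 2 * a1 x ^ 2 / a0 x ^ 3.
Definition inv_deriv3 x :=
  - a3 x / a0 x ^ 2 + 6 * a1 x * a2 x / a0 x ^ 3 - 6 * a1 x ^ 3 / a0 x ^ 4.
Definition inv_deriv4 x :=
  - a4 x / a0 x ^ 2 + 8 * a1 x * a3 x / a0 x ^ 3 + 6 * a2 x ^ 2 / a0 x ^ 3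
  - 36 * a1 x ^ 2 * a2 x / a0 x ^ 4 + 24 * a1 x ^ 4 / a0 x ^ 5.

Lemma is_derive_inv_derivs x :
  is_derive a0 x (a1 x) -> is_derive a1 x (a2 x) -> is_derive a2 x (a3 x) ->
  is_derive a3 x (a4 x) -> a0 x <> 0 ->
  is_derive (fun y => / a0 y) x (inv_deriv1 x) /\
  is_derive inv_deriv1 x (inv_deriv2 x) /\
  is_derive inv_deriv2 x (inv_deriv3 x) /\
  is_derive inv_deriv3 x (inv_deriv4 x).
Proof.
  intros H0 H1 H2 H3 Hn.
  assert (E0 : Derive (fun y => a0 y) x = a1 x) by (apply is_derive_unique; auto).
  assert (E1 : Derive (fun y => a1 y) x = a2 x) by (apply is_derive_unique; auto).
  assert (E2 : Derive (fun y => a2 y) x = a3 x) by (apply is_derive_unique; auto).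
  assert (E3 : Derive (fun y => a3 y) x = a4 x) by (apply is_derive_unique; auto).
  unfold inv_deriv1, inv_deriv2, inv_deriv3, inv_deriv4.
  split; [|split; [|split]]; auto_derive;
    try (rewrite ?E0, ?E1, ?E2, ?E3; field; auto; fail);
    repeat split; try (eexists; eassumption); auto;
    repeat apply Rmult_integral_contrapositive_currified; auto; lra.
Qed.

End ReciprocalDerivatives.

Definition phi x := / exp_moment 0 x.
Definition phi1 := inv_deriv1 (exp_moment 0) (exp_moment 1).
Definition phi2 := inv_deriv2 (exp_moment 0) (exp_moment 1) (exp_moment 2).
Definition phi3 := inv_deriv3 (exp_moment 0) (exp_moment 1) (exp_moment 2) (exp_moment 3).
Definition phi4 :=
  inv_deriv4 (exp_moment 0) (exp_moment 1) (exp_moment 2) (exp_moment 3) (exp_moment 4).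

Lemma phi_eq x : 0 < x -> phi x = x / (exp x - 1).
Proof.
  intros Hx; unfold phi; rewrite exp_moment_0_eq by lra.
  pose proof (exp_ineq1 x); field; lra.
Qed.

Lemma phi_pos x : 0 < x -> 0 < phi x.
Proof. intros Hx; apply Rinv_0_lt_compat, exp_moment_0_pos, Hx. Qed.

Lemma is_derive_phi x : 0 < x ->
  is_derive phi x (phi1 x) /\ is_derive phi1 x (phi2 x) /\
  is_derive phi2 x (phi3 x) /\ is_derive phi3 x (phi4 x).
Proof.
  intros Hx; apply is_derive_inv_derivs; try apply is_derive_exp_moment; auto.
  apply Rgt_not_eq, exp_moment_0_pos, Hx.
Qed.

Lemma phi_derivs_bound x : 0 < x ->
  Rabs (phi1 x) <= phi x /\ Rabs (phi2 x) <= 3 * phi x /\ Rabs (phi4 x) <= 40 * phi x.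
Proof.
  intros Hx.
  set (m0 := exp_moment 0 x).
  assert (Hm0 : 0 < m0) by (apply exp_moment_0_pos, Hx).
  (* phi^(k) / phi is a polynomial in the ratios r_k = m_k / m_0, which lie in [0, 1] *)
  assert (Hr : forall k, 0 <= exp_moment k x / m0 <= 1).
  { intros k; split; [apply Rdiv_le_0_compat; [apply exp_moment_ge0|]; lra|].
    apply Rmult_le_reg_r with m0; [lra|].
    unfold Rdiv; rewrite Rmult_assoc, Rinv_l, Rmult_1_r, Rmult_1_l by lra.
    apply exp_moment_le_exp_moment_0, Hx. }
  destruct (Hr 1%nat) as [H1l H1u], (Hr 2%nat) as [H2l H2u].
  destruct (Hr 3%nat) as [H3l H3u], (Hr 4%nat) as [H4l H4u].
  set (r1 := exp_moment 1 x / m0) in *; set (r2 := exp_moment 2 x / m0) in *.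
  set (r3 := exp_moment 3 x / m0) in *; set (r4 := exp_moment 4 x / m0) in *.
  assert (E1 : phi1 x = - r1 * phi x)
    by (unfold phi1, inv_deriv1, phi, r1; fold m0; field; lra).
  assert (E2 : phi2 x = (- r2 + 2 * r1 ^ 2) * phi x)
    by (unfold phi2, inv_deriv2, phi, r1, r2; fold m0; field; lra).
  assert (E4 : phi4 x =
      (- r4 + 8 * r1 * r3 + 6 * r2 ^ 2 - 36 * r1 ^ 2 * r2 + 24 * r1 ^ 4) * phi x)
    by (unfold phi4, inv_deriv4, phi, r1, r2, r3, r4; fold m0; field; lra).
  assert (Hphi := phi_pos x Hx).
  assert (0 <= r1 * r3 <= 1) by (split; nra).
  assert (0 <= r2 ^ 2 <= 1) by (split; nra).
  assert (0 <= r1 ^ 2 <= 1) by (split; nra).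
  assert (0 <= r1 ^ 2 * r2 <= 1) by (split; nra).
  assert (0 <= r1 ^ 4 <= 1) by (replace (r1 ^ 4) with (r1 ^ 2 * r1 ^ 2) by ring; split; nra).
  rewrite E1, E2, E4, !Rabs_mult, (Rabs_right (phi x)) by lra.
  repeat split; [rewrite <- (Rmult_1_l (phi x)) at 2|..];
    apply Rmult_le_compat_r; try lra; apply Rabs_le; split; nra.
Qed.

Lemma phi_antitone a x : 0 < a -> a <= x -> phi x <= phi a.
Proof.
  intros Ha Hax.
  assert (H : 0 - 0 <= exp_moment 0 x - exp_moment 0 a).
  { apply (sub_le_sub_of_is_derive_le (fun _ => 0) (fun _ => 0) _ (exp_moment 1)); auto.
    - intros; apply (is_derive_const (V := R_NormedModule)).
    - intros y Hy; apply is_derive_exp_moment; lra.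
    - intros y Hy; apply exp_moment_ge0; lra. }
  apply Rinv_le_contravar; [apply exp_moment_0_pos|]; lra.
Qed.

Lemma phi_le_exp_half x : 0 < x -> phi x <= exp (- (x / 2)).
Proof.
  intros Hx; rewrite phi_eq by auto.
  (* equivalently sinh (x/2) >= x/2 *)
  assert (Hv : 0 <= exp x - 1 - x * exp (x / 2)).
  { apply (nonneg_of_is_derive_nonneg (fun y => exp y - 1 - y * exp (y / 2))
             (fun y => exp (y / 2) * (exp (y / 2) - 1 - y / 2))); [lra| | |].
    - rewrite Rmult_0_l, exp_0; ring.
    - intros y _; auto_derive; [exact I|].
      replace (exp y) with (exp (y / 2) * exp (y / 2))
        by (rewrite <- exp_plus; f_equal; field).
      unfold Rdiv; ring.
    - intros y _; apply Rmult_le_pos; [apply Rlt_le, exp_pos|].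
      pose proof (exp_ineq1_le (y / 2)); lra. }
  assert (He : 1 + x < exp x) by (apply exp_ineq1; lra).
  assert (Hm : exp (- (x / 2)) * exp (x / 2) = 1)
    by (rewrite <- exp_plus, <- exp_0; f_equal; ring).
  apply Rmult_le_reg_r with (exp x - 1); [lra|].
  replace (x / (exp x - 1) * (exp x - 1)) with x by (field; lra).
  pose proof (exp_pos (x / 2)); pose proof (exp_pos (- (x / 2))); nra.
Qed.

Lemma euler_maclaurin_step a t : 0 < a -> 0 < t ->
  Rabs (t * phi1 a - (phi (a + t) - phi a) + t / 2 * (phi1 (a + t) - phi1 a)
        - t ^ 2 / 12 * (phi2 (a + t) - phi2 a)) <= 7 * phi a * t ^ 4.
Proof.
  intros Ha Ht.
  set (M := 40 * phi a).
  assert (D0 : forall x, a <= x <= a + t -> is_derive phi x (phi1 x))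
    by (intros x Hx; apply is_derive_phi; lra).
  assert (D1 : forall x, a <= x <= a + t -> is_derive phi1 x (phi2 x))
    by (intros x Hx; apply is_derive_phi; lra).
  assert (D2 : forall x, a <= x <= a + t -> is_derive phi2 x (phi3 x))
    by (intros x Hx; apply is_derive_phi; lra).
  assert (D3 : forall x, a <= x <= a + t -> is_derive phi3 x (phi4 x))
    by (intros x Hx; apply is_derive_phi; lra).
  assert (HM : forall x, a <= x <= a + t -> Rabs (phi4 x) <= M).
  { intros x Hx; destruct (phi_derivs_bound x) as [_ [_ H4]]; [lra|].
    assert (phi x <= phi a) by (apply phi_antitone; lra); unfold M; lra. }
  assert (Hx : a <= a + t <= a + t) by lra.
  pose proof (taylor_remainder0 _ _ _ _ _ _ _ _ D0 D1 D2 D3 HM _ Hx) as B0.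
  pose proof (taylor_remainder1 _ _ _ _ _ _ _ D1 D2 D3 HM _ Hx) as B1.
  pose proof (taylor_remainder2 _ _ _ _ _ _ D2 D3 HM _ Hx) as B2.
  replace (a + t - a) with t in B0, B1, B2 by ring.
  set (R0 := phi (a + t) - _) in B0; set (R1 := phi1 (a + t) - _) in B1;
    set (R2 := phi2 (a + t) - _) in B2.
  (* the Euler-Maclaurin weights 1, 1/2, 1/12 cancel all terms up to t^3 *)
  replace (t * phi1 a - (phi (a + t) - phi a) + t / 2 * (phi1 (a + t) - phi1 a)
           - t ^ 2 / 12 * (phi2 (a + t) - phi2 a))
    with (- R0 + t / 2 * R1 - t ^ 2 / 12 * R2) by (unfold R0, R1, R2; field).
  apply Rabs_le_between in B0; apply Rabs_le_between in B1; apply Rabs_le_between in B2.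
  pose proof (phi_pos a Ha); assert (0 < t ^ 2) by (apply pow_lt; lra).
  unfold M in *; apply Rabs_le; split; nra.
Qed.

Lemma is_series_telescope (D : nat -> R) : is_lim_seq D 0 ->
  is_series (fun n => D n - D (S n)) (D O).
Proof.
  intros HD.
  enough (H : is_lim_seq (sum_n (fun n => D n - D (S n))) (D O)) by exact H.
  apply (is_lim_seq_ext (fun n => D O - D (S n))).
  - induction n as [|n IH]; [rewrite sum_O; reflexivity|].
    rewrite sum_Sn, <- IH; unfold plus; simpl; ring.
  - assert (H := is_lim_seq_minus' _ _ (D O) 0 (is_lim_seq_const (D O))
                     (proj1 (is_lim_seq_incr_1 D 0) HD)).
    rewrite Rminus_0_r in H; exact H.
Qed.

Lemma is_series_geom_succ (r c : R) : Rabs r < 1 ->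
  is_series (fun n => c * r ^ S n) (c * r / (1 - r)).
Proof.
  intros Hr.
  assert (H := is_series_scal (c * r) _ _ (is_series_geom r Hr)).
  replace (c * r / (1 - r)) with (scal (c * r) (/ (1 - r)))
    by (unfold scal; simpl; unfold mult; simpl; apply Rabs_lt_between in Hr; field; lra).
  apply (is_series_ext _ _ _ (fun n => Rmult_assoc c r (r ^ n)) H).
Qed.

Section EulerMaclaurinSum.

Variable t : R.
Hypothesis Ht : 0 < t.

Definition node (n : nat) : R := INR (S n) * t.

Definition em_boundary (n : nat) : R :=
  phi (node n) - t / 2 * phi1 (node n) + t ^ 2 / 12 * phi2 (node n).

Definition em_error (n : nat) : R :=
  t * phi1 (node n) - (phi (node (S n)) - phi (node n))
  + t / 2 * (phi1 (node (S n)) - phi1 (node n))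
  - t ^ 2 / 12 * (phi2 (node (S n)) - phi2 (node n)).

Let r := exp (- (t / 2)).

Lemma node_pos n : 0 < node n.
Proof. apply Rmult_lt_0_compat; [apply lt_0_INR; lia | exact Ht]. Qed.

Lemma phi_node_le n : phi (node n) <= r ^ S n.
Proof.
  eapply Rle_trans; [apply phi_le_exp_half, node_pos|].
  unfold r; rewrite <- Rpower_pow by apply exp_pos.
  unfold Rpower; rewrite ln_exp; right; f_equal; unfold node; field.
Qed.

Lemma Rabs_exp_neg_half_lt_1 : Rabs r < 1.
Proof.
  unfold r; rewrite Rabs_right by apply Rle_ge, Rlt_le, exp_pos.
  rewrite <- exp_0; apply exp_increasing; lra.
Qed.

Lemma ex_series_inv_exp_node_sub_1 : ex_series (fun n => / (exp (node n) - 1)).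
Proof.
  apply (@ex_series_le R_AbsRing R_CompleteNormedModule _ (fun n => / t * r ^ S n));
    [|eexists; apply is_series_geom_succ, Rabs_exp_neg_half_lt_1].
  intros n; change (norm (/ (exp (node n) - 1))) with (Rabs (/ (exp (node n) - 1))).
  pose proof (node_pos n) as Hx0; pose proof (phi_node_le n) as Hphi.
  pose proof (exp_ineq1 (node n) ltac:(lra)) as He.
  assert (Hx : t <= node n) by (unfold node; rewrite S_INR; pose proof (pos_INR n); nra).
  rewrite phi_eq in Hphi by lra; unfold Rdiv in Hphi.
  assert (0 < / (exp (node n) - 1)) by (apply Rinv_0_lt_compat; lra).
  rewrite Rabs_right by lra.
  apply Rmult_le_reg_l with t; [lra|].
  rewrite <- Rmult_assoc, Rinv_r, Rmult_1_l by lra; nra.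
Qed.

Lemma em_boundary_lim : is_lim_seq em_boundary 0.
Proof.
  set (c := 1 + t / 2 + t ^ 2 / 12 * 3).
  apply (is_lim_seq_le_le (fun n => - (c * r) * r ^ n) em_boundary (fun n => (c * r) * r ^ n)).
  - intros n.
    destruct (phi_derivs_bound (node n) (node_pos n)) as [B1 [B2 _]].
    pose proof (phi_node_le n); pose proof (phi_pos (node n) (node_pos n)).
    apply Rabs_le_between in B1; apply Rabs_le_between in B2.
    assert (0 < t ^ 2) by (apply pow_lt; lra).
    replace (c * r * r ^ n) with (c * r ^ S n) by (simpl; ring).
    replace (- (c * r) * r ^ n) with (- (c * r ^ S n)) by (simpl; ring).
    unfold em_boundary, c; split; nra.
  - replace (Finite 0) with (Rbar_mult (- (c * r)) 0) by (simpl; f_equal; ring).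
    apply is_lim_seq_scal_l, is_lim_seq_geom, Rabs_exp_neg_half_lt_1.
  - replace (Finite 0) with (Rbar_mult (c * r) 0) by (simpl; f_equal; ring).
    apply is_lim_seq_scal_l, is_lim_seq_geom, Rabs_exp_neg_half_lt_1.
Qed.

Lemma em_error_bound n : Rabs (em_error n) <= 7 * t ^ 4 * r ^ S n.
Proof.
  unfold em_error.
  replace (node (S n)) with (node n + t) by (unfold node; rewrite (S_INR (S n)); ring).
  eapply Rle_trans; [apply euler_maclaurin_step; [apply node_pos | exact Ht]|].
  pose proof (phi_node_le n); assert (0 < t ^ 4) by (apply pow_lt; lra); nra.
Qed.

Lemma em_error_summable_bound :
  ex_series em_error /\ Rabs (Series em_error) <= 7 * t ^ 4 * r / (1 - r).
Proof.
  pose proof (is_series_geom_succ r (7 * t ^ 4) Rabs_exp_neg_half_lt_1) as Hgeom.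
  assert (Habs : ex_series (fun n => Rabs (em_error n))).
  { apply (@ex_series_le R_AbsRing R_CompleteNormedModule _ (fun n => 7 * t ^ 4 * r ^ S n));
      [|eexists; exact Hgeom].
    intros n; change (norm (Rabs (em_error n))) with (Rabs (Rabs (em_error n))).
    rewrite Rabs_Rabsolu; apply em_error_bound. }
  split; [apply ex_series_Rabs, Habs|].
  eapply Rle_trans; [apply Series_Rabs, Habs|].
  rewrite <- (is_series_unique _ _ Hgeom).
  apply Series_le; [|eexists; exact Hgeom].
  intros n; split; [apply Rabs_pos | apply em_error_bound].
Qed.

Lemma is_series_phi1_nodes :
  is_series (fun n => - t * phi1 (node n)) (em_boundary O - Series em_error).
Proof.
  destruct em_error_summable_bound as [[l Hl] _].
  rewrite (is_series_unique _ _ Hl).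
  eapply is_series_ext;
    [|exact (is_series_minus _ _ _ _ (is_series_telescope _ em_boundary_lim) Hl)].
  intros n; unfold plus, opp; simpl; unfold em_boundary, em_error; ring.
Qed.

End EulerMaclaurinSum.

Lemma c2_em_formula q : 0 < q < 1 ->
  let t := ln (/ q) in let E := exp t in
  c2 q = (E - 1) / t ^ 2 * (em_boundary t O - Series (em_error t)) + / t - (E + 1) / (E - 1).
Proof.
  intros [Hq0 Hq1] t E.
  assert (HQ : 1 < / q) by (rewrite <- Rinv_1; apply Rinv_lt_contravar; lra).
  assert (Ht : 0 < t) by (unfold t; rewrite <- ln_1; apply ln_increasing; lra).
  assert (HEq : E = / q) by (apply exp_ln; lra).
  assert (He : 1 + t < E) by (apply exp_ineq1; lra).
  assert (Hpow : forall n, (/ q) ^ S n = exp (node t n)).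
  { intros n; rewrite <- Rpower_pow by lra; reflexivity. }
  set (b1 := fun n : nat => / ((/ q) ^ S n - 1)).
  set (b2 := fun n : nat => INR (S n) * (/ q) ^ S n / ((/ q) ^ S n - 1) ^ 2).
  assert (Hphi1 : forall n, - t * phi1 (node t n) = t ^ 2 * b2 n - t * b1 n).
  { intros n; unfold b1, b2, phi1, inv_deriv1, exp_moment; rewrite Hpow.
    pose proof (node_pos t Ht n) as Hx; pose proof (exp_ineq1 (node t n) ltac:(lra)).
    replace (INR (S n)) with (node t n / t) by (unfold node; field; lra).
    simpl; field; repeat split; lra. }
  assert (Hb1 : is_series b1 (Series b1)).
  { apply Series_correct, (ex_series_ext (fun n => / (exp (node t n) - 1)));
      [intros n; unfold b1; rewrite Hpow; reflexivity | apply ex_series_inv_exp_node_sub_1, Ht]. }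
  set (S1 := Series b1) in Hb1.
  set (Sphi := em_boundary t O - Series (em_error t)).
  assert (Hb2 : is_series b2 ((Sphi + t * S1) / t ^ 2)).
  { replace ((Sphi + t * S1) / t ^ 2) with (scal (/ t ^ 2) (plus Sphi (scal t S1)))
      by (unfold scal, plus; simpl; unfold mult; simpl; field; lra).
    eapply is_series_ext;
      [|exact (is_series_scal (/ t ^ 2) _ _
                 (is_series_plus _ _ _ _ (is_series_phi1_nodes t Ht) (is_series_scal t _ _ Hb1)))].
    intros n; unfold scal, plus; simpl; unfold mult; simpl; rewrite Hphi1; field; lra. }
  unfold c2; fold t.
  change (Series (fun n : nat => / ((/ q) ^ S n - 1))) with (Series b1).
  change (Series (fun n : nat => INR (S n) * (/ q) ^ S n / ((/ q) ^ S n - 1) ^ 2))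
    with (Series b2).
  rewrite (is_series_unique _ _ Hb2); fold S1.
  replace q with (/ E) by (rewrite HEq; field; lra).
  field; repeat split; lra.
Qed.

Lemma pow_le_pow_of_le_1 t m n : 0 <= t <= 1 -> (m <= n)%nat -> t ^ n <= t ^ m.
Proof.
  intros Ht Hmn.
  replace n with (m + (n - m))%nat by lia; rewrite pow_add.
  assert (t ^ (n - m) <= 1) by (rewrite <- (pow1 (n - m)); apply pow_incr; lra).
  assert (0 <= t ^ m) by (apply pow_le; lra).
  nra.
Qed.

Lemma exp_taylor3 t : 0 <= t <= 1 ->
  Rabs (exp t - (1 + t + t ^ 2 / 2 + t ^ 3 / 6)) <= t ^ 4 / 8.
Proof.
  intros Ht.
  assert (Hd : forall x, 0 <= x <= t -> is_derive exp x (exp x))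
    by (intros; apply is_derive_exp).
  assert (Hb : forall x, 0 <= x <= t -> Rabs (exp x) <= 3).
  { intros x Hx; rewrite Rabs_right by apply Rle_ge, Rlt_le, exp_pos.
    eapply Rle_trans; [|apply exp_le_3].
    destruct (Req_dec x 1) as [->|]; [lra|]; left; apply exp_increasing; lra. }
  pose proof (taylor_remainder0 exp exp exp exp exp 0 t 3 Hd Hd Hd Hd Hb t ltac:(lra)) as H.
  rewrite exp_0, Rminus_0_r, !Rmult_1_l in H; lra.
Qed.

Lemma em_main_numerator_bound t y : 0 < t <= 1 ->
  Rabs (y - (t + t ^ 2 / 2 + t ^ 3 / 6)) <= t ^ 4 / 8 ->
  Rabs (y ^ 2 * (18 - 11 * t + 7 * t ^ 2 / 3) + y * (3 * t ^ 2 - 20 * t) + 2 * t ^ 2)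
    <= 12 * t ^ 5.
Proof.
  intros Ht Hy.
  set (y0 := t + t ^ 2 / 2 + t ^ 3 / 6) in Hy.
  set (s := y - y0) in Hy.
  set (K := (2 * y0 + s) * (18 - 11 * t + 7 * t ^ 2 / 3) + 3 * t ^ 2 - 20 * t).
  (* at y = y0 the terms of order t^2, t^3, t^4 cancel *)
  replace (y ^ 2 * (18 - 11 * t + 7 * t ^ 2 / 3) + y * (3 * t ^ 2 - 20 * t) + 2 * t ^ 2)
    with (- 7 / 12 * t ^ 5 + t ^ 6 / 36 + t ^ 7 / 12 + 7 * t ^ 8 / 108 + s * K)
    by (unfold K, s, y0; field).
  apply Rabs_le_between in Hy.
  assert (Ht5 : 0 < t ^ 5) by (apply pow_lt; lra).
  assert (Hp : forall m n, (m <= n)%nat -> 0 <= t ^ n <= t ^ m)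
    by (intros m n Hmn; split; [apply pow_le | apply pow_le_pow_of_le_1]; auto; lra).
  destruct (Hp 5%nat 6%nat), (Hp 5%nat 7%nat), (Hp 5%nat 8%nat); try lia.
  assert (Hy0 : 0 <= 2 * y0 + s <= 4 * t).
  { destruct (Hp 1%nat 2%nat), (Hp 1%nat 3%nat), (Hp 1%nat 4%nat); try lia.
    unfold y0 in *; simpl pow in *; lra. }
  assert (Hc : 0 <= 18 - 11 * t + 7 * t ^ 2 / 3 <= 21) by (simpl; split; nra).
  assert (HK : Rabs K <= 85 * t) by (unfold K; apply Rabs_le; simpl pow in *; split; nra).
  assert (HsK : Rabs (s * K) <= 11 * t ^ 5).
  { rewrite Rabs_mult.
    assert (Rabs s <= t ^ 4 / 8) by (apply Rabs_le; lra).
    apply Rle_trans with (t ^ 4 / 8 * (85 * t)).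
    - apply Rmult_le_compat; auto using Rabs_pos.
    - simpl pow; nra. }
  apply Rabs_le_between in HsK; apply Rabs_le; lra.
Qed.

Lemma em_main_term_bound t : 0 < t <= 1 ->
  let E := exp t in
  Rabs ((E - 1) / t ^ 2 * em_boundary t O + / t - (E + 1) / (E - 1) - (1 / 4 - t / 9))
    <= t ^ 2.
Proof.
  intros Ht E.
  assert (HE : 1 + t < E) by (apply exp_ineq1; lra).
  replace ((E - 1) / t ^ 2 * em_boundary t O + / t - (E + 1) / (E - 1) - (1 / 4 - t / 9))
    with (((E - 1) ^ 2 * (18 - 11 * t + 7 * t ^ 2 / 3) + (E - 1) * (3 * t ^ 2 - 20 * t)
           + 2 * t ^ 2) / (12 * t * (E - 1) ^ 2)).
  2: { unfold em_boundary, node, phi, phi1, phi2, inv_deriv1, inv_deriv2, exp_moment, E.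
       replace (INR 1 * t) with t by (simpl; ring).
       simpl pow_exp_integral; field; unfold E in HE; split; lra. }
  set (y := E - 1).
  assert (Hy : Rabs (y - (t + t ^ 2 / 2 + t ^ 3 / 6)) <= t ^ 4 / 8).
  { replace (y - _) with (exp t - (1 + t + t ^ 2 / 2 + t ^ 3 / 6)) by (unfold y, E; ring).
    apply exp_taylor3; lra. }
  assert (Hty : t ^ 2 <= y ^ 2) by (apply pow_incr; unfold y; lra).
  assert (0 < t ^ 2) by (apply pow_lt; lra).
  rewrite Rabs_div, (Rabs_right (12 * t * y ^ 2)) by nra.
  apply Rle_trans with (12 * t ^ 5 / (12 * t * y ^ 2)).
  - apply Rmult_le_compat_r; [apply Rlt_le, Rinv_0_lt_compat; nra|].
    apply em_main_numerator_bound; auto.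
  - apply Rle_trans with (12 * t ^ 5 / (12 * t * t ^ 2)); [|right; field; lra].
    apply Rmult_le_compat_l; [assert (0 < t ^ 5) by (apply pow_lt; lra); lra|].
    apply Rinv_le_contravar; nra.
Qed.

Lemma Series_em_error_le t : 0 < t -> Rabs (Series (em_error t)) <= 14 * t ^ 3.
Proof.
  intros Ht.
  destruct (em_error_summable_bound t Ht) as [_ H].
  set (w := exp (t / 2)) in *.
  assert (Hw : 1 + t / 2 < w) by (apply exp_ineq1; lra).
  assert (Hr : exp (- (t / 2)) = / w) by (unfold w; rewrite exp_Ropp; reflexivity).
  rewrite Hr in H.
  eapply Rle_trans; [exact H|].
  replace (7 * t ^ 4 * / w / (1 - / w)) with (7 * t ^ 4 / (w - 1)) by (field; lra).
  apply Rle_trans with (7 * t ^ 4 / (t / 2)); [|right; field; lra].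
  apply Rmult_le_compat_l; [assert (0 < t ^ 4) by (apply pow_lt; lra); lra|].
  apply Rinv_le_contravar; lra.
Qed.

Lemma c2_asymptotic_bound q : 1 / 2 < q < 1 ->
  Rabs (c2 q - (1 / 4 + 1 / 9 * ln q)) <= 30 * ln q ^ 2.
Proof.
  intros Hq.
  assert (HF := c2_em_formula q ltac:(lra)); cbv zeta in HF.
  set (t := ln (/ q)) in *; set (E := exp t) in *.
  assert (Hlnq : ln q = - t) by (unfold t; rewrite ln_Rinv by lra; ring).
  assert (Ht : 0 < t <= 1).
  { assert (H2 : 1 < / q < 2).
    { split; [rewrite <- Rinv_1 | replace 2 with (/ (1 / 2)) by field];
        apply Rinv_lt_contravar; lra. }
    pose proof (exp_ineq1 1 ltac:(lra)).
    unfold t; split.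
    - rewrite <- ln_1; apply ln_increasing; lra.
    - rewrite <- (ln_exp 1); left; apply ln_increasing; lra. }
  assert (HE : t < E - 1 <= 2 * t).
  { pose proof (exp_taylor3 t ltac:(lra)) as Hexp; apply Rabs_le_between in Hexp.
    split; [unfold E; pose proof (exp_ineq1 t); lra|].
    assert (t ^ 2 <= t /\ t ^ 3 <= t /\ t ^ 4 <= t) as (? & ? & ?)
      by (repeat split; rewrite <- (pow_1 t) at 2; apply pow_le_pow_of_le_1; lra || lia).
    unfold E; lra. }
  rewrite HF, Hlnq.
  replace ((E - 1) / t ^ 2 * (em_boundary t O - Series (em_error t)) + / t - (E + 1) / (E - 1)
           - (1 / 4 + 1 / 9 * - t))
    with (((E - 1) / t ^ 2 * em_boundary t O + / t - (E + 1) / (E - 1) - (1 / 4 - t / 9))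
          - (E - 1) / t ^ 2 * Series (em_error t)) by (field; lra).
  eapply Rle_trans; [apply Rabs_triang|].
  rewrite Rabs_Ropp, Rabs_mult, (Rabs_right ((E - 1) / t ^ 2))
    by (apply Rle_ge, Rdiv_le_0_compat; [|apply pow_lt]; lra).
  assert (0 < t ^ 2) by (apply pow_lt; lra).
  apply Rle_trans with (t ^ 2 + 2 * t / t ^ 2 * (14 * t ^ 3)).
  2: { replace (t ^ 2 + 2 * t / t ^ 2 * (14 * t ^ 3)) with (29 * t ^ 2) by (field; lra); nra. }
  apply Rplus_le_compat; [apply em_main_term_bound; lra|].
  apply Rmult_le_compat; [apply Rdiv_le_0_compat; lra | apply Rabs_pos | |].
  - apply Rmult_le_compat_r; [apply Rlt_le, Rinv_0_lt_compat|]; lra.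
  - apply Series_em_error_le; lra.
Qed.

Lemma ln_le_sub_1 y : 0 < y -> ln y <= y - 1.
Proof.
  intros Hy; rewrite <- (ln_exp (y - 1)); apply ln_le; [exact Hy|].
  pose proof (exp_ineq1_le (y - 1)); lra.
Qed.

Lemma c2_sub_quarter_le q : 1 / 2 < q < 1 -> Rabs (c2 q - 1 / 4) <= 62 * (1 - q).
Proof.
  intros Hq.
  assert (Ht : 0 < - ln q <= 2 * (1 - q)).
  { split; [assert (ln q < ln 1) by (apply ln_increasing; lra); rewrite ln_1 in *; lra|].
    rewrite <- ln_Rinv by lra.
    apply Rle_trans with (/ q - 1); [apply ln_le_sub_1, Rinv_0_lt_compat; lra|].
    apply Rmult_le_reg_l with q; [lra|].
    replace (q * (/ q - 1)) with (1 - q) by (field; lra); nra. }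
  pose proof (c2_asymptotic_bound q Hq) as H; apply Rabs_le_between in H.
  assert (ln q ^ 2 <= - ln q) by (simpl; nra).
  apply Rabs_le; split; nra.
Qed.

Theorem mainTheorem8 :
  (exists C delta : R, 0 < C /\ 0 < delta /\
     forall q : R, 1 - delta < q < 1 ->
       Rabs (c2 q - (1/4 + (1/9) * ln q)) <= C * (ln q) ^ 2)
  /\ filterlim c2 (at_left 1) (locally (1/4)).
Proof.
  split.
  - exists 30, (1 / 2); repeat split; try lra.
    intros q Hq; apply c2_asymptotic_bound; lra.
  - apply filterlim_locally; intros eps.
    assert (Hd : 0 < Rmin (1 / 2) (eps / 62))
      by (apply Rmin_pos; [lra | pose proof (cond_pos eps); lra]).
    exists (mkposreal _ Hd); intros q Hball Hq1.
    pose proof (Rmin_l (1 / 2) (eps / 62)); pose proof (Rmin_r (1 / 2) (eps / 62)).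
    change (Rabs (q - 1) < Rmin (1 / 2) (eps / 62)) in Hball.
    apply Rabs_lt_between' in Hball.
    eapply Rle_lt_trans; [apply c2_sub_quarter_le; lra | lra].
Qed.
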